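(* For every $x\ge0$, $$J_0(\sqrt2x)-2J_0(x)+1=\frac{2}{\pi}\int_0^{\pi/2}\bigl(1-\cos(x\cos t)\bigr)\bigl(1-\cos(x\sin t)\bigr)\,dt.$$ In particular $J_0(\sqrt2x)-2J_0(x)+1\ge0$ for all $x\ge0$. Consequently, for all $r,\theta_2,\sigma>0$, $\alpha\in(0,2)$, $b\in(0,1/2)$ and $\kappa,\eta\in\mathbb R$, the quantity $$g_{r,\alpha}(\vartheta)=\frac{\sigma^2\psi_{r,\alpha}(\theta_2)}{(1-2b)^2}\int_b^{1-b}\!\int_b^{1-b}e^{-\kappa y-\eta z}\,dy\,dz$$ is strictly positive.
   Context: $J_0$ denotes the Bessel function of the first kind of order $0$, i.e. $J_0(x)=\frac{2}{\pi}\int_0^{\pi/2}\cos(x\cos t)\,dt$. For $r,\alpha,\theta_2>0$, $$\psi_{r,\alpha}(\theta_2)=\frac{2}{\theta_2\pi}\int_0^\infty\frac{1-e^{-x^2}}{x^{1+2\alpha}}\Bigl(J_0\bigl(\tfrac{\sqrt2rx}{\sqrt{\theta_2}}\bigr)-2J_0\bigl(\tfrac{rx}{\sqrt{\theta_2}}\bigr)+1\Bigr)dx,$$ and $\vartheta=(\kappa,\eta,\theta_2,\sigma^2)$. *)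

From Stdlib Require Import Reals.
From Coquelicot Require Import Coquelicot.
Open Scope R_scope.

Definition J0 (x : R) : R :=
  2 / PI * RInt (fun t => cos (x * cos t)) 0 (PI / 2).

Definition psi (r alpha theta2 : R) : R :=
  2 / (theta2 * PI) *
  RInt_gen (fun x => (1 - exp (- x ^ 2)) / Rpower x (1 + 2 * alpha) *
                     (J0 (sqrt 2 * r * x / sqrt theta2)
                      - 2 * J0 (r * x / sqrt theta2) + 1))
           (at_right 0) (Rbar_locally p_infty).

(* g_{r,alpha}(vartheta), vartheta = (kappa, eta, theta2, sigma^2) *)
Definition g (r alpha b kappa eta theta2 sigma : R) : R :=
  sigma ^ 2 * psi r alpha theta2 / (1 - 2 * b) ^ 2 *
  RInt (fun z => RInt (fun y => exp (- kappa * y - eta * z)) b (1 - b)) b (1 - b).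

From Stdlib Require Import Reals Lra.
From Coquelicot Require Import Coquelicot.
Open Scope R_scope.

(* With a = x cos t and b = x sin t, (1 - cos a)(1 - cos b) = 1 - cos a - cos b
   + (cos (a + b) + cos (a - b)) / 2, and a +- b = sqrt 2 x cos (t -+ pi/4).  The
   shifted integrals of cos (sqrt 2 x cos t) cover the half period [-pi/4, 3pi/4],
   which the symmetries t -> -t, t -> pi - t fold onto twice [0, pi/2]; the term
   cos (x sin t) gives J0 x by t -> pi/2 - t.  This yields the integral formula,
   whose integrand is nonnegative, bounded by 4 and by x^4/4, and positive when
   0 < x <= pi.  Hence the integrand of psi is nonnegative, bounded near 0 and
   O(x^(-1-2 alpha)) at infinity, so its improper integral converges (Cauchy
   criterion) and is positive; the double integral in g factors into two positive
   integrals. *)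

Lemma continuous_of_ex_derive (f : R -> R) (x : R) : ex_derive f x -> continuous f x.
Proof. exact (ex_derive_continuous f x). Qed.

Lemma ex_RInt_of_continuous (f : R -> R) (a b : R) :
  (forall x, continuous f x) -> ex_RInt f a b.
Proof.
  intros Hf; apply (ex_RInt_continuous (V := R_CompleteNormedModule)); intros x _; apply Hf.
Qed.

Lemma RInt_comp_shift (f : R -> R) (c a b : R) : (forall x, continuous f x) ->
  RInt (fun t => f (t + c)) a b = RInt f (a + c) (b + c).
Proof.
  intros Hf.
  replace (a + c) with (1 * a + c) by ring; replace (b + c) with (1 * b + c) by ring.
  rewrite <- RInt_comp_lin by (apply ex_RInt_of_continuous, Hf).
  apply RInt_ext; intros t _; unfold scal; simpl; unfold mult; simpl.
  rewrite Rmult_1_l; f_equal; ring.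
Qed.

Lemma RInt_comp_reflect (f : R -> R) (c a b : R) : (forall x, continuous f x) ->
  RInt (fun t => f (c - t)) a b = RInt f (c - b) (c - a).
Proof.
  intros Hf.
  assert (Hcomp : forall x, continuous (fun t => f (-1 * t + c)) x).
  { intros x; apply (continuous_comp (fun t => -1 * t + c) f).
    - apply continuous_of_ex_derive; auto_derive; auto.
    - apply Hf. }
  pose proof (RInt_comp_lin f (-1) c a b (ex_RInt_of_continuous _ _ _ Hf)) as E.
  rewrite RInt_scal in E by (apply ex_RInt_of_continuous, Hcomp).
  rewrite <- (opp_RInt_swap f) by (apply ex_RInt_of_continuous, Hf).
  replace (c - a) with (-1 * a + c) by ring; replace (c - b) with (-1 * b + c) by ring.
  rewrite <- E; unfold scal, opp; simpl; unfold mult; simpl.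
  rewrite (RInt_ext (fun t => f (c - t)) (fun t => f (-1 * t + c))) by (intros; f_equal; ring).
  assert (Hneg : forall y : R, y = - (-1 * y)) by (intros; ring); apply Hneg.
Qed.

(** * An integral formula for J0 (sqrt 2 x) - 2 J0 x + 1 *)

Lemma continuous_cos_mul_cos (y x : R) : continuous (fun t => cos (y * cos t)) x.
Proof. apply continuous_of_ex_derive; auto_derive; auto. Qed.

Lemma RInt_cos_mul_sin (y : R) :
  RInt (fun t => cos (y * sin t)) 0 (PI / 2) = RInt (fun t => cos (y * cos t)) 0 (PI / 2).
Proof.
  rewrite <- (RInt_ext (fun t => cos (y * cos (PI / 2 - t))))
    by (intros; rewrite cos_shift; reflexivity).
  rewrite (RInt_comp_reflect (fun t => cos (y * cos t))) by apply continuous_cos_mul_cos.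
  f_equal; ring.
Qed.

Lemma RInt_cos_mul_cos_half_period (y : R) :
  RInt (fun t => cos (y * cos t)) (- (PI / 4)) (3 * (PI / 4)) =
  2 * RInt (fun t => cos (y * cos t)) 0 (PI / 2).
Proof.
  set (f := fun t => cos (y * cos t)).
  assert (Chasles : forall a b c, RInt f a b + RInt f b c = RInt f a c).
  { intros; apply (RInt_Chasles f); apply ex_RInt_of_continuous, continuous_cos_mul_cos. }
  assert (Heven : RInt f (- (PI / 4)) 0 = RInt f 0 (PI / 4)).
  { rewrite <- (RInt_ext (fun t => f (0 - t)) f)
      by (intros; unfold f; rewrite Rminus_0_l, cos_neg; reflexivity).
    rewrite (RInt_comp_reflect f) by apply continuous_cos_mul_cos.
    f_equal; ring. }
  assert (Hrefl : RInt f (PI / 2) (3 * (PI / 4)) = RInt f (PI / 4) (PI / 2)).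
  { rewrite <- (RInt_ext (fun t => f (PI - t)) f).
    - rewrite (RInt_comp_reflect f) by apply continuous_cos_mul_cos.
      f_equal; field.
    - intros t _; unfold f; rewrite Rtrigo_facts.cos_pi_minus.
      replace (y * - cos t) with (- (y * cos t)) by ring; apply cos_neg. }
  rewrite <- (Chasles _ 0), <- (Chasles 0 (PI / 2)), Heven, Hrefl,
    <- (Chasles 0 (PI / 4) (PI / 2)).
  lra.
Qed.

Lemma RInt_cos_mul_cos_add_sin (x : R) :
  RInt (fun t => cos (x * cos t + x * sin t)) 0 (PI / 2) =
  RInt (fun t => cos (sqrt 2 * x * cos t)) (- (PI / 4)) (PI / 4).
Proof.
  rewrite <- (RInt_ext (fun t => cos (sqrt 2 * x * cos (t + - (PI / 4))))).
  - rewrite (RInt_comp_shift (fun t => cos (sqrt 2 * x * cos t)))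
      by apply continuous_cos_mul_cos.
    f_equal; field.
  - intros t _; f_equal.
    rewrite cos_plus, cos_neg, sin_neg, cos_PI4, sin_PI4.
    field; apply sqrt2_neq_0.
Qed.

Lemma RInt_cos_mul_cos_sub_sin (x : R) :
  RInt (fun t => cos (x * cos t - x * sin t)) 0 (PI / 2) =
  RInt (fun t => cos (sqrt 2 * x * cos t)) (PI / 4) (3 * (PI / 4)).
Proof.
  rewrite <- (RInt_ext (fun t => cos (sqrt 2 * x * cos (t + PI / 4)))).
  - rewrite (RInt_comp_shift (fun t => cos (sqrt 2 * x * cos t)))
      by apply continuous_cos_mul_cos.
    f_equal; field.
  - intros t _; f_equal.
    rewrite cos_plus, cos_PI4, sin_PI4.
    field; apply sqrt2_neq_0.
Qed.

Lemma one_sub_cos_mul_one_sub_cos (a b : R) :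
  (1 - cos a) * (1 - cos b) = 1 - cos a - cos b + (cos (a + b) + cos (a - b)) / 2.
Proof. rewrite cos_plus, cos_minus; field. Qed.

Lemma RInt_one_sub_cos_mul_one_sub_cos (u v : R -> R) (a b : R) :
  (forall x, continuous u x) -> (forall x, continuous v x) ->
  RInt (fun t => (1 - cos (u t)) * (1 - cos (v t))) a b =
  (b - a) - RInt (fun t => cos (u t)) a b - RInt (fun t => cos (v t)) a b
  + (RInt (fun t => cos (u t + v t)) a b + RInt (fun t => cos (u t - v t)) a b) / 2.
Proof.
  intros Hu Hv.
  assert (Hcos : forall w : R -> R, (forall x, continuous w x) ->
            is_RInt (fun t => cos (w t)) a b (RInt (fun t => cos (w t)) a b)).
  { intros w Hw; apply (RInt_correct (V := R_CompleteNormedModule)).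
    apply ex_RInt_of_continuous; intros x; apply (continuous_comp w cos); [apply Hw|].
    apply continuous_of_ex_derive; auto_derive; auto. }
  assert (Huv : forall x, continuous (fun t => u t + v t) x)
    by (intros; apply (continuous_plus u v); auto).
  assert (Hu_v : forall x, continuous (fun t => u t - v t) x)
    by (intros; apply (continuous_minus u v); auto).
  apply is_RInt_unique.
  pose proof (is_RInt_plus _ _ _ _ _ _
    (is_RInt_minus _ _ _ _ _ _
      (is_RInt_minus _ _ _ _ _ _ (is_RInt_const a b 1) (Hcos u Hu)) (Hcos v Hv))
    (is_RInt_scal _ _ _ (/ 2) _
      (is_RInt_plus _ _ _ _ _ _ (Hcos _ Huv) (Hcos _ Hu_v)))) as H.
  unfold plus, minus, scal, opp in H; simpl in H; unfold mult, plus, opp in H; simpl in H.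
  replace ((b - a) - RInt (fun t => cos (u t)) a b - RInt (fun t => cos (v t)) a b
    + (RInt (fun t => cos (u t + v t)) a b + RInt (fun t => cos (u t - v t)) a b) / 2)
    with ((b - a) * 1 + - RInt (fun t => cos (u t)) a b + - RInt (fun t => cos (v t)) a b
      + / 2 * (RInt (fun t => cos (u t + v t)) a b + RInt (fun t => cos (u t - v t)) a b))
    by field.
  revert H; apply is_RInt_ext; intros t _; simpl.
  rewrite one_sub_cos_mul_one_sub_cos; lra.
Qed.

Definition J0_gap (x : R) : R := J0 (sqrt 2 * x) - 2 * J0 x + 1.

Lemma J0_gap_integral (x : R) :
  J0_gap x =
  2 / PI * RInt (fun t => (1 - cos (x * cos t)) * (1 - cos (x * sin t))) 0 (PI / 2).
Proof.
  rewrite (RInt_one_sub_cos_mul_one_sub_cos (fun t => x * cos t) (fun t => x * sin t))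
    by (intros; apply continuous_of_ex_derive; auto_derive; auto).
  rewrite RInt_cos_mul_sin, RInt_cos_mul_cos_add_sin, RInt_cos_mul_cos_sub_sin.
  rewrite (RInt_Chasles (fun t => cos (sqrt 2 * x * cos t)))
    by apply ex_RInt_of_continuous, continuous_cos_mul_cos.
  rewrite RInt_cos_mul_cos_half_period.
  unfold J0_gap, J0; field; apply PI_neq0.
Qed.

Lemma Rabs_sin_le (z : R) : Rabs (sin z) <= Rabs z.
Proof.
  destruct (MVT_abs sin cos 0 z) as [c [Hc _]].
  { intros; apply derivable_pt_lim_sin. }
  rewrite sin_0, !Rminus_0_r in Hc; rewrite Hc.
  assert (Rabs (cos c) <= 1) by (apply Rabs_le, COS_bound).
  pose proof (Rabs_pos z); nra.
Qed.

Lemma Rabs_cos_sub_le (a b : R) : Rabs (cos a - cos b) <= Rabs (a - b).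
Proof.
  destruct (MVT_abs cos (fun x => - sin x) b a) as [c [Hc _]].
  { intros; apply derivable_pt_lim_cos. }
  rewrite Hc, Rabs_Ropp.
  assert (Rabs (sin c) <= 1) by (apply Rabs_le, SIN_bound).
  pose proof (Rabs_pos (a - b)); nra.
Qed.

Lemma one_sub_cos_le (u : R) : 1 - cos u <= u ^ 2 / 2.
Proof.
  replace u with (2 * (u / 2)) at 1 by field; rewrite cos_2a_sin.
  pose proof (Rsqr_le_abs_1 _ _ (Rabs_sin_le (u / 2))) as H; unfold Rsqr in H; nra.
Qed.

Lemma one_sub_cos_pos (u : R) : 0 < u < 2 * PI -> 0 < 1 - cos u.
Proof.
  intros Hu; replace u with (2 * (u / 2)) by field; rewrite cos_2a_sin.
  assert (0 < sin (u / 2)) by (apply sin_gt_0; lra); nra.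
Qed.

Lemma J0_gap_integrand_bounds (x t : R) :
  0 <= (1 - cos (x * cos t)) * (1 - cos (x * sin t)) <= Rmin 4 (x ^ 4 / 4).
Proof.
  pose proof (COS_bound (x * cos t)); pose proof (COS_bound (x * sin t)).
  pose proof (one_sub_cos_le (x * cos t)); pose proof (one_sub_cos_le (x * sin t)).
  assert (Hsq : forall c, -1 <= c <= 1 -> (x * c) ^ 2 <= x ^ 2).
  { intros c Hc; replace ((x * c) ^ 2) with (x ^ 2 * c ^ 2) by ring.
    assert (c ^ 2 <= 1) by nra; pose proof (pow2_ge_0 x); nra. }
  pose proof (Hsq _ (COS_bound t)); pose proof (Hsq _ (SIN_bound t)).
  split; [apply Rmult_le_pos; lra|apply Rmin_glb].
  - apply Rle_trans with (2 * 2); [apply Rmult_le_compat|]; lra.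
  - apply Rle_trans with ((x ^ 2 / 2) * (x ^ 2 / 2)); [apply Rmult_le_compat|]; lra.
Qed.

Lemma J0_gap_bounds (x : R) : 0 <= J0_gap x <= Rmin 4 (x ^ 4 / 4).
Proof.
  rewrite J0_gap_integral.
  set (h := fun t => (1 - cos (x * cos t)) * (1 - cos (x * sin t))).
  assert (Hh : ex_RInt h 0 (PI / 2))
    by (apply ex_RInt_of_continuous; intros; apply continuous_of_ex_derive; unfold h;
        auto_derive; auto).
  pose proof PI_RGT_0.
  assert (Hlow : 0 <= RInt h 0 (PI / 2))
    by (apply RInt_ge_0; auto; [lra | intros; apply J0_gap_integrand_bounds]).
  assert (Hup : RInt h 0 (PI / 2) <= RInt (fun _ => Rmin 4 (x ^ 4 / 4)) 0 (PI / 2)).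
  { apply RInt_le; auto; [lra | apply ex_RInt_const | intros; apply J0_gap_integrand_bounds]. }
  rewrite RInt_const in Hup; unfold scal in Hup; simpl in Hup; unfold mult in Hup; simpl in Hup.
  split.
  - apply Rmult_le_pos; auto; apply Rlt_le, Rdiv_lt_0_compat; lra.
  - apply Rle_trans with (2 / PI * ((PI / 2 - 0) * Rmin 4 (x ^ 4 / 4))).
    + apply Rmult_le_compat_l; auto; apply Rlt_le, Rdiv_lt_0_compat; lra.
    + right; field; lra.
Qed.

Lemma J0_gap_pos (x : R) : 0 < x <= PI -> 0 < J0_gap x.
Proof.
  intros Hx; rewrite J0_gap_integral; pose proof PI2_1.
  apply Rmult_lt_0_compat; [apply Rdiv_lt_0_compat; lra|].
  apply RInt_gt_0; [lra| |intros; apply continuous_of_ex_derive; auto_derive; auto].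
  intros t Ht.
  assert (0 < cos t) by (apply cos_gt_0; lra).
  assert (0 < sin t) by (apply sin_gt_0; lra).
  pose proof (COS_bound t); pose proof (SIN_bound t).
  apply Rmult_lt_0_compat; apply one_sub_cos_pos; split; nra.
Qed.

Lemma J0_lipschitz (u v : R) : Rabs (J0 u - J0 v) <= Rabs (u - v).
Proof.
  pose proof PI_RGT_0.
  unfold J0; rewrite <- Rmult_minus_distr_l.
  rewrite <- (RInt_minus (V := R_CompleteNormedModule))
    by apply ex_RInt_of_continuous, continuous_cos_mul_cos.
  rewrite Rabs_mult, (Rabs_right (2 / PI)) by (apply Rle_ge, Rlt_le, Rdiv_lt_0_compat; lra).
  apply Rle_trans with (2 / PI * ((PI / 2 - 0) * Rabs (u - v))); [|right; field; lra].
  apply Rmult_le_compat_l; [apply Rlt_le, Rdiv_lt_0_compat; lra|].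
  apply abs_RInt_le_const; [lra| |]; unfold minus, plus, opp; simpl.
  - apply ex_RInt_of_continuous; intros; apply continuous_of_ex_derive; auto_derive; auto.
  - intros t _; eapply Rle_trans; [apply Rabs_cos_sub_le|].
    replace (u * cos t - v * cos t) with ((u - v) * cos t) by ring.
    rewrite Rabs_mult; assert (Rabs (cos t) <= 1) by (apply Rabs_le, COS_bound).
    pose proof (Rabs_pos (u - v)); nra.
Qed.

Lemma continuous_J0 (x : R) : continuous J0 x.
Proof.
  apply filterlim_locally; intros eps; exists eps; intros y Hy.
  exact (Rle_lt_trans _ _ _ (J0_lipschitz y x) Hy).
Qed.

Lemma continuous_J0_gap_scale (c x : R) : continuous (fun y => J0_gap (c * y)) x.
Proof.
  unfold J0_gap.
  assert (Hlin : forall k, continuous (fun y => J0 (k * y)) x).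
  { intros k; apply (continuous_comp (fun y => k * y) J0); [|apply continuous_J0].
    apply continuous_of_ex_derive; auto_derive; auto. }
  apply (continuous_plus (fun y => J0 (sqrt 2 * (c * y)) - 2 * J0 (c * y)) (fun _ => 1));
    [|apply continuous_const].
  apply (continuous_minus (fun y => J0 (sqrt 2 * (c * y))) (fun y => 2 * J0 (c * y))).
  - apply (continuous_ext (fun y => J0 ((sqrt 2 * c) * y))); [intros; f_equal; ring|].
    apply Hlin.
  - apply (continuous_scal_r 2 (fun y => J0 (c * y))), Hlin.
Qed.

(** * Improper integrals of nonnegative functions over (0, +oo) *)

Lemma filterlim_RInt_of_is_RInt_gen (f : R -> R) (Fa Fb : (R -> Prop) -> Prop) (l : R) :
  Filter Fa -> Filter Fb -> is_RInt_gen f Fa Fb l ->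
  filterlim (fun ab => RInt f (fst ab) (snd ab)) (filter_prod Fa Fb) (locally l).
Proof.
  intros HFa HFb Hl P HP.
  specialize (Hl P HP); unfold filtermapi in Hl.
  apply (filter_imp (F := filter_prod Fa Fb)) with (2 := Hl).
  intros ab [y [Hy HPy]]; unfold filtermap; now rewrite (is_RInt_unique _ _ _ _ Hy).
Qed.

Lemma is_RInt_gen_of_filterlim_RInt (f : R -> R) (Fa Fb : (R -> Prop) -> Prop) (l : R) :
  Filter Fa -> Filter Fb ->
  filter_prod Fa Fb (fun ab => ex_RInt f (fst ab) (snd ab)) ->
  filterlim (fun ab => RInt f (fst ab) (snd ab)) (filter_prod Fa Fb) (locally l) ->
  is_RInt_gen f Fa Fb l.
Proof.
  intros HFa HFb Hex Hl.
  apply (filterlimi_lim_ext_loc (fun ab => RInt f (fst ab) (snd ab))); [|exact Hl].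
  apply (filter_imp (F := filter_prod Fa Fb)) with (2 := Hex).
  intros ab Hab; exact (RInt_correct (V := R_CompleteNormedModule) _ _ _ Hab).
Qed.

Notation zero_infty := (filter_prod (at_right 0) (Rbar_locally p_infty)).

Lemma zero_infty_near (d M : R) : 0 < d -> zero_infty (fun ab => 0 < fst ab < d /\ M < snd ab).
Proof.
  intros Hd; apply (Filter_prod _ _ _ (fun a => 0 < a < d) (fun b => M < b)).
  - exists (mkposreal d Hd); intros y Hy Hy0; simpl.
    change (Rabs (y - 0) < d) in Hy; rewrite Rminus_0_r in Hy; apply Rabs_def2 in Hy; lra.
  - exists M; auto.
  - intros; split; assumption.
Qed.

Lemma is_RInt_Rpower (e a b : R) : e <> -1 -> 0 < a -> 0 < b ->
  is_RInt (fun x => Rpower x e) a b ((Rpower b (e + 1) - Rpower a (e + 1)) / (e + 1)).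
Proof.
  intros He Ha Hb.
  assert (Hmin : 0 < Rmin a b) by (apply Rmin_glb_lt; assumption).
  replace ((Rpower b (e + 1) - Rpower a (e + 1)) / (e + 1))
    with (minus (Rpower b (e + 1) / (e + 1)) (Rpower a (e + 1) / (e + 1)))
    by (unfold minus, plus, opp; simpl; field; contradict He; lra).
  apply (is_RInt_derive (fun x => Rpower x (e + 1) / (e + 1))).
  - intros x Hx; apply is_derive_Reals.
    replace (Rpower x e) with ((e + 1) * Rpower x (e + 1 - 1) / (e + 1))
      by (replace (e + 1 - 1) with e by ring; field; contradict He; lra).
    apply (derivable_pt_lim_scal_right (fun y => Rpower y (e + 1))), derivable_pt_lim_power; lra.
  - intros x Hx; apply continuous_of_ex_derive.
    eexists; apply is_derive_Reals, derivable_pt_lim_power; lra.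
Qed.

Lemma Rpower_opp_small (q eps : R) : 0 < q -> 0 < eps ->
  exists M, 1 <= M /\ Rpower M (- q) <= eps.
Proof.
  intros Hq Heps.
  set (k := Rabs (ln eps) / q).
  assert (Hk : 0 <= k) by (apply Rdiv_le_0_compat; [apply Rabs_pos | exact Hq]).
  exists (exp k); split; [pose proof (exp_ineq1_le k); lra|].
  unfold Rpower; rewrite ln_exp, <- (exp_ln eps Heps).
  assert (Hle : - q * k <= ln eps).
  { replace (- q * k) with (- Rabs (ln eps)) by (unfold k; field; lra).
    pose proof (Rle_abs (- ln eps)); rewrite Rabs_Ropp in *; lra. }
  destruct Hle as [Hlt | Heq]; [left; apply exp_increasing, Hlt | right; f_equal; exact Heq].
Qed.

Section NonnegOnPositiveReals.

Variable f : R -> R.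
Hypothesis f_cont : forall x, 0 < x -> continuous f x.
Hypothesis f_ge0 : forall x, 0 < x -> 0 <= f x.

Lemma ex_RInt_pos (a b : R) : 0 < a -> 0 < b -> ex_RInt f a b.
Proof.
  intros Ha Hb; apply (ex_RInt_continuous (V := R_CompleteNormedModule)); intros z Hz.
  apply f_cont; pose proof (Rmin_glb_lt a b 0 Ha Hb); lra.
Qed.

Lemma RInt_Chasles_pos (a b c : R) : 0 < a -> 0 < b -> 0 < c ->
  RInt f a b + RInt f b c = RInt f a c.
Proof. intros; apply (RInt_Chasles f); apply ex_RInt_pos; assumption. Qed.

Lemma RInt_ge0_pos (a b : R) : 0 < a <= b -> 0 <= RInt f a b.
Proof.
  intros; apply RInt_ge_0; [lra | apply ex_RInt_pos; lra | intros; apply f_ge0; lra].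
Qed.

Lemma ex_RInt_gen_zero_infty :
  (forall eps, 0 < eps -> exists d, 0 < d /\ forall a, 0 < a < d -> RInt f a d < eps) ->
  (forall eps, 0 < eps -> exists M, 0 < M /\ forall b, M < b -> RInt f M b < eps) ->
  ex_RInt_gen f (at_right 0) (Rbar_locally p_infty).
Proof.
  intros Hhead Htail.
  set (G := filtermap (fun ab => RInt f (fst ab) (snd ab)) zero_infty).
  assert (HG : ProperFilter G) by (apply filtermap_proper_filter; typeclasses eauto).
  assert (Hcauchy : cauchy G).
  { intros [eps Heps]; simpl.
    destruct (Hhead (eps / 2)) as [d [Hd Hd_small]]; [lra|].
    destruct (Htail (eps / 2)) as [M [HM HM_small]]; [lra|].
    exists (RInt f d M).
    apply (filter_imp (F := zero_infty)) with (2 := zero_infty_near d M Hd).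
    intros [a b] [Ha Hb]; simpl in *.
    change (Rabs (RInt f a b - RInt f d M) < eps).
    rewrite <- (RInt_Chasles_pos a d b), <- (RInt_Chasles_pos d M b) by lra.
    pose proof (RInt_ge0_pos a d); pose proof (RInt_ge0_pos M b).
    pose proof (Hd_small a Ha); pose proof (HM_small b Hb).
    rewrite Rabs_right; lra. }
  exists (lim G).
  apply is_RInt_gen_of_filterlim_RInt; try apply Rbar_locally_filter;
    try apply at_right_proper_filter.
  - apply (filter_imp (F := zero_infty)) with (2 := zero_infty_near 1 0 Rlt_0_1).
    intros [a b] [Ha Hb]; apply ex_RInt_pos; simpl in *; lra.
  - intros P [eps HP]; apply (filter_imp (F := G)) with (2 := complete_cauchy G HG Hcauchy eps).
    exact HP.
Qed.

Lemma RInt_le_is_RInt_gen (a b l : R) : 0 < a <= b ->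
  is_RInt_gen f (at_right 0) (Rbar_locally p_infty) l -> RInt f a b <= l.
Proof.
  intros Hab Hl.
  apply (closed_filterlim_loc (F := zero_infty) (fun ab => RInt f (fst ab) (snd ab))
           (fun y => RInt f a b <= y)).
  - apply filterlim_RInt_of_is_RInt_gen; try apply Rbar_locally_filter;
      try apply at_right_proper_filter; exact Hl.
  - apply (filter_imp (F := zero_infty)) with (2 := zero_infty_near a b (proj1 Hab)).
    intros [a' b'] [Ha' Hb']; simpl in *.
    rewrite <- (RInt_Chasles_pos a' a b'), <- (RInt_Chasles_pos a b b') by lra.
    pose proof (RInt_ge0_pos a' a); pose proof (RInt_ge0_pos b b'); lra.
  - apply closed_ge.
Qed.

Lemma RInt_head_small (K : R) : (forall x, 0 < x <= 1 -> f x <= K) ->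
  forall eps, 0 < eps -> exists d, 0 < d /\ forall a, 0 < a < d -> RInt f a d < eps.
Proof.
  intros HK eps Heps.
  assert (0 <= K) by (apply Rle_trans with (f 1); [apply f_ge0 | apply HK]; lra).
  set (d := Rmin 1 (eps / (K + 1))).
  assert (Hd : 0 < d) by (apply Rmin_glb_lt; [lra | apply Rdiv_lt_0_compat; lra]).
  assert (K * d < eps).
  { apply Rle_lt_trans with (K * (eps / (K + 1))).
    - apply Rmult_le_compat_l; [assumption | apply Rmin_r].
    - apply Rmult_lt_reg_r with (K + 1); [lra|]; field_simplify; lra. }
  exists d; split; [exact Hd|]; intros a Ha.
  assert (d <= 1) by apply Rmin_l.
  apply Rle_lt_trans with (RInt (fun _ => K) a d).
  - apply RInt_le; [lra | apply ex_RInt_pos; lra | apply ex_RInt_const | intros; apply HK; lra].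
  - rewrite RInt_const; unfold scal; simpl; unfold mult; simpl; nra.
Qed.

Lemma tail_coef_ge0 (C e : R) : (forall x, 1 <= x -> f x <= C * Rpower x e) -> 0 <= C.
Proof.
  intros HC; pose proof (HC 1 (Rle_refl 1)) as H1; pose proof (f_ge0 1 Rlt_0_1).
  unfold Rpower in H1; rewrite ln_1, Rmult_0_r, exp_0 in H1; lra.
Qed.

Lemma RInt_tail_le (C q M b : R) : 0 < q -> 1 <= M <= b ->
  (forall x, 1 <= x -> f x <= C * Rpower x (- q - 1)) ->
  RInt f M b <= C * Rpower M (- q) / q.
Proof.
  intros Hq HMb HC.
  pose proof (tail_coef_ge0 _ _ HC).
  assert (HI : is_RInt (fun x => C * Rpower x (- q - 1)) M b
    (C * ((Rpower b (- q - 1 + 1) - Rpower M (- q - 1 + 1)) / (- q - 1 + 1)))).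
  { assert (- q - 1 <> -1) by (intros E; lra).
    exact (is_RInt_scal _ _ _ C _
             (is_RInt_Rpower (- q - 1) M b ltac:(assumption) ltac:(lra) ltac:(lra))). }
  replace (- q - 1 + 1) with (- q) in HI by ring.
  apply Rle_trans with (RInt (fun x => C * Rpower x (- q - 1)) M b).
  - apply RInt_le; [lra | apply ex_RInt_pos; lra | eexists; exact HI |].
    intros; apply HC; lra.
  - rewrite (is_RInt_unique _ _ _ _ HI).
    assert (0 <= C * Rpower b (- q) / q)
      by (apply Rdiv_le_0_compat; [apply Rmult_le_pos; [|left; apply exp_pos] |]; assumption).
    replace (C * ((Rpower b (- q) - Rpower M (- q)) / - q))
      with (C * Rpower M (- q) / q - C * Rpower b (- q) / q) by (field; lra).
    lra.
Qed.

Lemma RInt_tail_small (C q : R) : 0 < q ->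
  (forall x, 1 <= x -> f x <= C * Rpower x (- q - 1)) ->
  forall eps, 0 < eps -> exists M, 0 < M /\ forall b, M < b -> RInt f M b < eps.
Proof.
  intros Hq HC eps Heps.
  pose proof (tail_coef_ge0 _ _ HC).
  destruct (Rpower_opp_small q (eps * q / (C + 1))) as [M [HM HMq]];
    [assumption | apply Rdiv_lt_0_compat; nra|].
  exists M; split; [lra|]; intros b Hb.
  apply Rle_lt_trans with (C * Rpower M (- q) / q).
  { apply RInt_tail_le; [exact Hq | lra | exact HC]. }
  apply Rle_lt_trans with (C * (eps * q / (C + 1)) / q).
  - apply Rmult_le_compat_r; [left; apply Rinv_0_lt_compat, Hq|].
    apply Rmult_le_compat_l; lra.
  - replace (C * (eps * q / (C + 1)) / q) with (eps * C * / (C + 1)) by (field; lra).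
    apply Rmult_lt_reg_r with (C + 1); [lra|].
    rewrite Rmult_assoc, Rinv_l by lra; nra.
Qed.

End NonnegOnPositiveReals.

(** * Positivity of psi and g *)

Lemma exp_le_1 (u : R) : u <= 0 -> exp u <= 1.
Proof.
  intros [Hlt | Heq]; rewrite <- exp_0; [left; apply exp_increasing, Hlt | rewrite Heq; lra].
Qed.

Lemma one_sub_exp_neg_sqr_bounds (x : R) :
  0 <= 1 - exp (- x ^ 2) /\ 1 - exp (- x ^ 2) <= 1 /\ 1 - exp (- x ^ 2) <= x ^ 2.
Proof.
  pose proof (exp_pos (- x ^ 2)); pose proof (exp_ineq1_le (- x ^ 2)).
  assert (exp (- x ^ 2) <= 1) by (apply exp_le_1; pose proof (pow2_ge_0 x); lra).
  repeat split; lra.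
Qed.

Lemma Rpower_le_1 (x e : R) : 0 < x <= 1 -> 0 <= e -> Rpower x e <= 1.
Proof.
  intros Hx He; apply exp_le_1.
  assert (ln x <= 0) by (rewrite <- ln_1; apply ln_le; lra); nra.
Qed.

Definition psi_integrand (alpha c x : R) : R :=
  (1 - exp (- x ^ 2)) / Rpower x (1 + 2 * alpha) * J0_gap (c * x).

Section PsiIntegrand.

Variables alpha c : R.

Lemma continuous_psi_integrand (x : R) : 0 < x -> continuous (psi_integrand alpha c) x.
Proof.
  intros Hx; unfold psi_integrand.
  apply (continuous_mult (fun y => (1 - exp (- y ^ 2)) / Rpower y (1 + 2 * alpha))
                         (fun y => J0_gap (c * y))); [|apply continuous_J0_gap_scale].
  apply continuous_of_ex_derive; auto_derive; repeat split.
  - eexists; apply is_derive_Reals, derivable_pt_lim_power, Hx.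
  - apply Rgt_not_eq, exp_pos.
Qed.

Lemma psi_integrand_ge0 (x : R) : 0 < x -> 0 <= psi_integrand alpha c x.
Proof.
  intros Hx; unfold psi_integrand.
  pose proof (one_sub_exp_neg_sqr_bounds x); pose proof (J0_gap_bounds (c * x)).
  pose proof (exp_pos ((1 + 2 * alpha) * ln x)).
  apply Rmult_le_pos; [apply Rdiv_le_0_compat|]; tauto.
Qed.

Lemma psi_integrand_le_head (x : R) : 2 * alpha <= 5 -> 0 < x <= 1 ->
  psi_integrand alpha c x <= c ^ 4 / 4.
Proof.
  intros Halpha Hx; unfold psi_integrand, Rdiv.
  destruct (one_sub_exp_neg_sqr_bounds x) as [He0 [_ He]].
  destruct (J0_gap_bounds (c * x)) as [Hg0 Hg]; pose proof (Rmin_r 4 ((c * x) ^ 4 / 4)).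
  assert (Hp : 0 < / Rpower x (1 + 2 * alpha)) by apply Rinv_0_lt_compat, exp_pos.
  assert (Hx6 : x ^ 6 * / Rpower x (1 + 2 * alpha) <= 1).
  { rewrite <- Rpower_Ropp, <- (Rpower_pow 6 x) by lra; rewrite <- Rpower_plus.
    apply Rpower_le_1; [lra | simpl; lra]. }
  apply Rle_trans with (x ^ 2 * / Rpower x (1 + 2 * alpha) * ((c * x) ^ 4 / 4)).
  - apply Rmult_le_compat; [nra | assumption | apply Rmult_le_compat_r; lra | lra].
  - pose proof (pow2_ge_0 (c ^ 2)); nra.
Qed.

Lemma psi_integrand_le_tail (x : R) : 1 <= x ->
  psi_integrand alpha c x <= 4 * Rpower x (- (2 * alpha) - 1).
Proof.
  intros Hx; unfold psi_integrand, Rdiv.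
  destruct (one_sub_exp_neg_sqr_bounds x) as [He0 [He _]].
  destruct (J0_gap_bounds (c * x)) as [Hg0 Hg]; pose proof (Rmin_l 4 ((c * x) ^ 4 / 4)).
  replace (- (2 * alpha) - 1) with (- (1 + 2 * alpha)) by ring; rewrite Rpower_Ropp.
  assert (Hp : 0 < / Rpower x (1 + 2 * alpha)) by apply Rinv_0_lt_compat, exp_pos.
  apply Rle_trans with (1 * / Rpower x (1 + 2 * alpha) * 4); [|lra].
  apply Rmult_le_compat; [nra | assumption | apply Rmult_le_compat_r; lra | lra].
Qed.

Lemma psi_integrand_pos (x : R) : 0 < x -> 0 < c * x <= PI -> 0 < psi_integrand alpha c x.
Proof.
  intros Hx Hcx; unfold psi_integrand.
  assert (exp (- x ^ 2) < 1) by (rewrite <- exp_0; apply exp_increasing; nra).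
  apply Rmult_lt_0_compat; [apply Rdiv_lt_0_compat; [lra | apply exp_pos]|].
  apply J0_gap_pos, Hcx.
Qed.

End PsiIntegrand.

Lemma is_RInt_gen_psi_integrand_pos (alpha c : R) : 0 < alpha -> 2 * alpha <= 5 -> 0 < c ->
  exists l, 0 < l /\ is_RInt_gen (psi_integrand alpha c) (at_right 0) (Rbar_locally p_infty) l.
Proof.
  intros Halpha Halpha5 Hc.
  set (f := psi_integrand alpha c).
  assert (Hf_cont : forall x, 0 < x -> continuous f x) by apply continuous_psi_integrand.
  assert (Hf_ge0 : forall x, 0 < x -> 0 <= f x) by apply psi_integrand_ge0.
  destruct (ex_RInt_gen_zero_infty f Hf_cont Hf_ge0) as [l Hl].
  - apply (RInt_head_small f Hf_cont Hf_ge0 (c ^ 4 / 4)).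
    intros; apply psi_integrand_le_head; assumption.
  - apply (RInt_tail_small f Hf_cont Hf_ge0 4 (2 * alpha)); [lra|].
    apply psi_integrand_le_tail.
  - exists l; split; [|exact Hl].
    assert (Hab : 0 < / (2 * c) < / c)
      by (split; [apply Rinv_0_lt_compat | apply Rinv_lt_contravar]; nra).
    apply Rlt_le_trans with (RInt f (/ (2 * c)) (/ c));
      [|apply (RInt_le_is_RInt_gen f Hf_cont Hf_ge0); [lra | exact Hl]].
    apply RInt_gt_0; [lra | |intros; apply Hf_cont; lra].
    intros x Hx; apply psi_integrand_pos; [lra|].
    pose proof PI2_1; split; [nra|].
    apply Rle_trans with (c * / c); [apply Rmult_le_compat_l; lra | rewrite Rinv_r; lra].
Qed.

Lemma psi_pos (r alpha theta2 : R) : 0 < r -> 0 < theta2 -> 0 < alpha -> 2 * alpha <= 5 ->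
  0 < psi r alpha theta2.
Proof.
  intros Hr Htheta Halpha Halpha5.
  assert (Hs : 0 < sqrt theta2) by (apply sqrt_lt_R0, Htheta).
  destruct (is_RInt_gen_psi_integrand_pos alpha (r / sqrt theta2) Halpha Halpha5)
    as [l [Hl Hint]]; [apply Rdiv_lt_0_compat; assumption|].
  unfold psi; erewrite is_RInt_gen_unique.
  - pose proof PI_RGT_0; apply Rmult_lt_0_compat; [apply Rdiv_lt_0_compat; nra | exact Hl].
  - apply (is_RInt_gen_ext (psi_integrand alpha (r / sqrt theta2))); [|exact Hint].
    apply filter_forall; intros ab x _; unfold psi_integrand, J0_gap.
    replace (sqrt 2 * (r / sqrt theta2 * x)) with (sqrt 2 * r * x / sqrt theta2) by (field; lra).
    replace (r / sqrt theta2 * x) with (r * x / sqrt theta2) by (field; lra).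
    reflexivity.
Qed.

Lemma RInt_RInt_exp_affine_pos (kappa eta a b : R) : a < b ->
  0 < RInt (fun z => RInt (fun y => exp (- kappa * y - eta * z)) a b) a b.
Proof.
  intros Hab.
  set (C := RInt (fun y => exp (- kappa * y)) a b).
  assert (HC : 0 < C).
  { apply RInt_gt_0; [lra | intros; apply exp_pos |].
    intros; apply continuous_of_ex_derive; auto_derive; auto. }
  rewrite (RInt_ext _ (fun z => exp (- eta * z) * C)).
  - apply RInt_gt_0; [lra | intros; apply Rmult_lt_0_compat; [apply exp_pos | exact HC] |].
    intros; apply continuous_of_ex_derive; auto_derive; auto.
  - intros z _; unfold C; rewrite <- (RInt_scal (V := R_CompleteNormedModule))
      by (apply ex_RInt_of_continuous; intros; apply continuous_of_ex_derive; auto_derive; auto).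
    apply RInt_ext; intros y _; unfold scal; simpl; unfold mult; simpl.
    replace (- kappa * y - eta * z) with (- eta * z + - kappa * y) by ring.
    apply exp_plus.
Qed.

Theorem mainTheorem6 :
  (forall x : R, 0 <= x ->
     J0 (sqrt 2 * x) - 2 * J0 x + 1 =
     2 / PI * RInt (fun t => (1 - cos (x * cos t)) * (1 - cos (x * sin t))) 0 (PI / 2))
  /\ (forall x : R, 0 <= x -> 0 <= J0 (sqrt 2 * x) - 2 * J0 x + 1)
  /\ (forall r theta2 sigma alpha b kappa eta : R,
        0 < r -> 0 < theta2 -> 0 < sigma ->
        0 < alpha < 2 -> 0 < b < 1 / 2 ->
        0 < g r alpha b kappa eta theta2 sigma).
Proof.
  split; [|split].
  - intros x _; exact (J0_gap_integral x).
  - intros x _; exact (proj1 (J0_gap_bounds x)).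
  - intros r theta2 sigma alpha b kappa eta Hr Htheta Hsigma Halpha Hb; unfold g.
    pose proof (psi_pos r alpha theta2 Hr Htheta ltac:(lra) ltac:(lra)).
    pose proof (RInt_RInt_exp_affine_pos kappa eta b (1 - b) ltac:(lra)).
    assert (0 < sigma ^ 2) by (apply pow_lt, Hsigma).
    assert (0 < (1 - 2 * b) ^ 2) by (apply pow_lt; lra).
    apply Rmult_lt_0_compat; [apply Rdiv_lt_0_compat; [apply Rmult_lt_0_compat|] |]; assumption.
Qed.
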